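(* Let $\epsilon\in(0,3/4]$, let $\mathcal{Y}=\sum_{k=1}^r\alpha_k\bigcirc_{\ell=1}^d\mathbf{y}^{(\ell)}_k\in\mathbb{C}^{n_1\times\cdots\times n_d}$ be a rank-$r$ tensor in standard form, and for each $j\in[d]$ let $\mathbf{A}_j\in\mathbb{C}^{m_j\times n_j}$ be an $(\epsilon/4d)$-JL embedding into $\mathbb{C}^{m_j}$ of the $2r^2-r$ vectors $$\mathcal{S}'_j:=\Big(\bigcup_{1\le h<k\le r}\{\mathbf{y}^{(j)}_k-\mathbf{y}^{(j)}_h,\ \mathbf{y}^{(j)}_k+\mathbf{y}^{(j)}_h,\ \mathbf{y}^{(j)}_k-\mathrm{i}\,\mathbf{y}^{(j)}_h,\ \mathbf{y}^{(j)}_k+\mathrm{i}\,\mathbf{y}^{(j)}_h\}\Big)\cup\{\mathbf{y}^{(j)}_k\}_{k\in[r]}\subset\mathbb{C}^{n_j}.$$ Then $$\big|\|\mathcal{Y}\|^2-\|\mathcal{Y}\times_1\mathbf{A}_1\cdots\times_d\mathbf{A}_d\|^2\big|\le\epsilon\Big(e+e^2\sqrt{r(r-1)}\max\big(\epsilon^{d-1},\mu_{\mathcal{Y}}^{d-1}\big)\Big)\|\boldsymbol\alpha\|_2^2\le\epsilon e^2(r+1)\|\boldsymbol\alpha\|_2^2 .$$ Furthermore, if $\mu_{\mathcal{Y}}=0$ then $$\big|\|\mathcal{Y}\|^2-\|\mathcal{Y}\times_1\mathbf{A}_1\cdots\times_d\mathbf{A}_d\|^2\big|\le\big(\epsilon+e\sqrt{r(r-1)}\,\epsilon^d\big)e\,\|\boldsymbol\alpha\|_2^2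 .$$
   Context: Tensors in $\mathbb{C}^{n_1\times\cdots\times n_d}$ have inner product $\langle\mathcal{X},\mathcal{Y}\rangle=\sum\mathcal{X}_{i_1\dots i_d}\overline{\mathcal{Y}_{i_1\dots i_d}}$ and norm $\|\cdot\|$; $\bigcirc$ is the outer product; the $j$-mode product is $(\mathcal{X}\times_j\mathbf{U})_{i_1,\dots,\ell,\dots,i_d}=\sum_{i_j}\mathcal{X}_{i_1,\dots,i_j,\dots,i_d}\mathbf{U}_{\ell,i_j}$; $\mathrm{i}$ is the imaginary unit and $e$ Euler's number. A matrix $\mathbf{A}$ is an $\epsilon$-JL embedding of a set $S$ if $\|\mathbf{A}x\|_2^2=(1+\epsilon_x)\|x\|_2^2$ with $\epsilon_x\in(-\epsilon,\epsilon)$ for all $x\in S$. Standard form: $\|\mathbf{y}^{(\ell)}_k\|_2=1$ for all $\ell,k$; $\boldsymbol\alpha=(\alpha_k)_{k\in[r]}$. The maximum modewise coherence (relative to this representation) is $\mu_{\mathcal{Y}}=\max_{\ell\in[d]}\max_{k\ne h}|\langle\mathbf{y}^{(\ell)}_k,\mathbf{y}^{(\ell)}_h\rangle|$. *)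

From HB Require Import structures.
From mathcomp Require Import all_boot all_order all_algebra.
From mathcomp Require Import complex.
From mathcomp Require Import reals sequences exp.
Set Implicit Arguments. Unset Strict Implicit. Unset Printing Implicit Defensive.
Import Order.TTheory GRing.Theory Num.Theory ComplexField.
Local Open Scope ring_scope.
Local Open Scope complex_scope.

Section Defs.
Variable R : realType.
Local Notation C := R[i].

Definition cabs2 (z : C) : R := (complex.Re z) ^+ 2 + (complex.Im z) ^+ 2.
Definition cabs (z : C) : R := Num.sqrt (cabs2 z).

Definition cinner n (x y : 'cV[C]_n) : C := \sum_(i < n) x i 0 * (y i 0)^*.
Definition cnorm2 n (x : 'cV[C]_n) : R := \sum_(i < n) cabs2 (x i 0).

Definition JL_embedding m n (eps : R) (A : 'M[C]_(m, n)) (S : pred 'cV[C]_n) :=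
  forall x, S x -> exists ex : R, - eps < ex < eps /\
     cnorm2 (A *m x) = (1 + ex) * cnorm2 x.

Definition multi_index d (n : 'I_d -> nat) := {dffun forall l : 'I_d, 'I_(n l)}.
Definition tensor d (n : 'I_d -> nat) := multi_index n -> C.

Definition tnorm2 d (n : 'I_d -> nat) (X : tensor n) : R :=
  \sum_(i : multi_index n) cabs2 (X i).

Definition cp_tensor d (n : 'I_d -> nat) r (alpha : 'I_r -> C)
  (y : forall l : 'I_d, 'I_r -> 'cV[C]_(n l)) : tensor n :=
  fun i => \sum_(k < r) alpha k * \prod_(l < d) y l k (i l) 0.

(* X x_1 A_1 x_2 A_2 ... x_d A_d  (all d mode products, written out):
   entry j = sum_i X_i prod_l (A_l)_{j_l, i_l} *)
Definition mode_products d (n m : 'I_d -> nat) (X : tensor n)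
  (A : forall l : 'I_d, 'M[C]_(m l, n l)) : tensor m :=
  fun j => \sum_(i : multi_index n) X i * \prod_(l < d) A l (j l) (i l).

Definition standard_form d (n : 'I_d -> nat) r
  (y : forall l : 'I_d, 'I_r -> 'cV[C]_(n l)) :=
  forall l k, cnorm2 (y l k) = 1.

(* maximum modewise coherence (0 if r <= 1) *)
Definition coherence d (n : 'I_d -> nat) r
  (y : forall l : 'I_d, 'I_r -> 'cV[C]_(n l)) : R :=
  \big[Num.max/0]_(l < d) \big[Num.max/0]_(k < r) \big[Num.max/0]_(h < r | h != k)
     cabs (cinner (y l k) (y l h)).

Definition Sprime d (n : 'I_d -> nat) r
  (y : forall l : 'I_d, 'I_r -> 'cV[C]_(n l)) (j : 'I_d) : pred 'cV[C]_(n j) :=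
  fun x => [exists h : 'I_r, exists k : 'I_r, (h < k)%N &&
             [|| x == y j k - y j h, x == y j k + y j h,
                 x == y j k - 'i *: y j h | x == y j k + 'i *: y j h]]
           || [exists k : 'I_r, x == y j k].

Definition alpha_norm2 r (alpha : 'I_r -> C) : R := \sum_(k < r) cabs2 (alpha k).

End Defs.
Arguments Sprime {R d n r} y j _.

From mathcomp Require Import all_boot all_order all_algebra.
From mathcomp Require Import complex.
From mathcomp Require Import reals sequences exp ring lra zify.
Import Order.TTheory GRing.Theory Num.Theory ComplexField.
Set Implicit Arguments. Unset Strict Implicit. Unset Printing Implicit Defensive.
Local Open Scope complex_scope.
Local Open Scope ring_scope.

(* Expanding the squared norms, ||Y||^2 = sum_(k,h) alpha_k conj(alpha_h)
   prod_l <y_k^(l), y_h^(l)>, and the mode products only replace every factor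
   y_k^(l) by A_l y_k^(l).  By polarization, the JL property on the vectors of
   S'_l gives |<A_l y_k, A_l y_h> - <y_k, y_h>| <= eps/(2d) for all k, h, so a
   telescoping estimate for products of d perturbed factors bounds the change of
   the (k,h) term by (1 + eps/(2d))^d - 1 if k = h and by
   (mu + eps/(2d))^d - mu^d otherwise.  Both are controlled through
   (1 + x/d)^d <= e^x, and sum_(k <> h) |alpha_k| |alpha_h| <= (r - 1) ||alpha||^2
   <= sqrt(r(r-1)) ||alpha||^2 finishes the count. *)

Lemma bigA_distr_dffun (R : comNzRingType) (I : finType) (T_ : I -> finType)
    (F : forall i, T_ i -> R) :
  \prod_i \sum_(j : T_ i) F i j =
  \sum_(t : {dffun forall i, T_ i}) \prod_i F i (t i).
Proof.
pose P_ i := [ffun j : T_ i => F i j].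
transitivity (\prod_i \sum_(j : T_ i) P_ i j).
  by apply: eq_bigr => i _; apply: eq_bigr => j _; rewrite ffunE.
under eq_bigr => i _ do rewrite (big_tag (fun i (j : T_ i) => P_ i j) i).
rewrite bigA_distr_big_dep -(@big_fprod _ 0 1 _ _ _ _ P_).
rewrite (reindex (@dffun_of_fprod _ T_)); last exact/onW_bij/dffun_of_fprod_bij.
by apply: eq_bigr => t _; apply: eq_bigr => i _; rewrite !ffunE.
Qed.

Lemma norm_prodrB_le (T : numDomainType) d (a b : 'I_d -> T) (B e : T) :
    0 <= B -> 0 <= e -> (forall i, `|b i| <= B) -> (forall i, `|a i - b i| <= e) ->
  `|\prod_i a i - \prod_i b i| <= (B + e) ^+ d - B ^+ d.
Proof.
move=> B0 e0; elim: d a b => [|d IH] a b hb hab.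
  by rewrite !big_ord0 !expr0 !subrr normr0.
have ha i : `|a i| <= B + e.
  by rewrite -(subrK (b i) (a i)) (le_trans (ler_normD _ _)) // addrC lerD.
have pa_le : `|\prod_i a (lift ord0 i)| <= (B + e) ^+ d.
  rewrite normr_prod -[d in X in _ <= X](card_ord d) -prodr_const.
  by apply: ler_prod => i _; rewrite normr_ge0 ha.
rewrite !big_ord_recl !exprS.
set pa := \prod_i a _; set pb := \prod_i b _.
have -> : a ord0 * pa - b ord0 * pb = (a ord0 - b ord0) * pa + b ord0 * (pa - pb).
  by ring.
apply: le_trans (ler_normD _ _) _; rewrite !normrM.
apply: le_trans (lerD (ler_pM (normr_ge0 _) (normr_ge0 _) (hab ord0) pa_le)
  (ler_pM (normr_ge0 _) (normr_ge0 _) (hb ord0) (IH _ _ (fun i => hb _) (fun i => hab _)))) _.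
by rewrite [leRHS](_ : _ = e * (B + e) ^+ d + B * ((B + e) ^+ d - B ^+ d)) //; ring.
Qed.

Lemma ler_wpXn2r (R : numDomainType) n (x y : R) : 0 <= x -> x <= y -> x ^+ n <= y ^+ n.
Proof. by move=> x0 xy; rewrite lerXn2r ?nnegrE // (le_trans x0 xy). Qed.

Lemma subrX_le (R : realDomainType) (x y : R) n : 0 <= y -> y <= x ->
  x ^+ n - y ^+ n <= n%:R * (x - y) * x ^+ n.-1.
Proof.
move=> y0 yx; have x0 := le_trans y0 yx.
rewrite subrXX (mulrC n%:R) -mulrA ler_wpM2l ?subr_ge0 //.
rewrite mulr_natl -[X in _ *+ X](card_ord n) -sumr_const.
apply: ler_sum => i _; have i_le : (i <= n.-1)%N by have := ltn_ord i; lia.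
by rewrite -[in leRHS](subnK i_le) exprD ler_wpM2l ?exprn_ge0 // ler_wpXn2r.
Qed.

Section ExpBounds.
Variable R : realType.
Local Notation e := (expR (1 : R)).

Lemma expR1_ge1 : 1 <= e.
Proof. by rewrite -[leLHS]expR0 ler_expR. Qed.

Lemma expr1Ddiv_le_expR (t : R) n : (0 < n)%N -> 0 <= t ->
  (1 + t / n%:R) ^+ n <= expR t.
Proof.
move=> n_gt0 t0; apply: le_trans (ler_wpXn2r n _ (expR_ge1Dx _)) _.
  by rewrite addr_ge0 ?divr_ge0.
by rewrite -expRM_natl mulrC divfK // pnatr_eq0 -lt0n.
Qed.

Lemma expr1Ddiv_pred_le_e (t : R) n : (0 < n)%N -> 0 <= t <= 1 ->
  (1 + t / n%:R) ^+ n.-1 <= e.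
Proof.
move=> n_gt0 /andP[t0 t1]; have g1 : 1 <= 1 + t / n%:R by rewrite lerDl divr_ge0.
apply: le_trans (_ : (1 + t / n%:R) ^+ n <= e).
  by rewrite -[X in _ <= _ ^+ X](prednK n_gt0) exprS ler_peMl ?exprn_ge0 // (le_trans ler01).
by apply: le_trans (expr1Ddiv_le_expR n_gt0 t0) _; rewrite ler_expR.
Qed.

Section PerturbationBounds.
Variables (eps eta : R) (d : nat).
Hypotheses (d_gt0 : (0 < d)%N) (eps_ge0 : 0 <= eps) (eps_le2 : eps <= 2).
Hypotheses (eta_ge0 : 0 <= eta) (deta_le : d%:R * eta <= eps / 2).

Let half_eps_ge0 : 0 <= eps / 2. Proof. by rewrite divr_ge0. Qed.
Let half_eps_le : eps / 2 <= eps. Proof. by rewrite ler_pdivrMr // ler_peMr // ler1n. Qed.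
Let half_eps_le1 : eps / 2 <= 1. Proof. by rewrite ler_pdivrMr // mul1r. Qed.

Lemma eta_le_div : eta <= eps / 2 / d%:R.
Proof. by rewrite ler_pdivlMr ?ltr0n // mulrC. Qed.

Lemma eta_le_eps : eta <= eps.
Proof.
apply: le_trans eta_le_div _; rewrite ler_pdivrMr ?ltr0n //.
by apply: le_trans half_eps_le _; rewrite ler_peMr ?ler1n.
Qed.

Lemma diag_pert_le : (1 + eta) ^+ d - 1 <= eps * e.
Proof.
have le1 : 1 <= 1 + eta by rewrite lerDl.
rewrite -[X in _ - X](expr1n _ d); apply: le_trans (subrX_le d ler01 le1) _.
rewrite addrAC subrr add0r; apply: ler_pM; rewrite ?mulr_ge0 ?exprn_ge0 ?addr_ge0 //.
  exact: le_trans deta_le half_eps_le.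
apply: le_trans (expr1Ddiv_pred_le_e d_gt0 (t := eps / 2) _); last exact/andP.
by apply: ler_wpXn2r; rewrite ?addr_ge0 // lerD2l eta_le_div.
Qed.

Lemma offdiag_pert_le mu : 0 <= mu ->
  (mu + eta) ^+ d - mu ^+ d <= eps * e * Num.max (eps ^+ d.-1) (mu ^+ d.-1).
Proof.
move=> mu0; set M := Num.max eps mu.
have M0 : 0 <= M by rewrite le_max eps_ge0.
have MX : M ^+ d.-1 <= Num.max (eps ^+ d.-1) (mu ^+ d.-1).
  by rewrite /M; case: (leP eps mu) => _; rewrite le_max lexx ?orbT.
have hM : mu + eta <= M * (1 + 2^-1 / d%:R).
  rewrite mulrDr mulr1 lerD ?le_max ?lexx ?orbT //.
  apply: le_trans eta_le_div _.
  by rewrite mulrA !ler_wpM2r ?invr_ge0 ?ler0n // le_max lexx.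
have le_mu : mu <= mu + eta by rewrite lerDl.
apply: le_trans (subrX_le d mu0 le_mu) _; rewrite addrAC subrr add0r.
rewrite -[in leRHS]mulrA [expR 1 * _]mulrC.
apply: ler_pM; rewrite ?mulr_ge0 ?exprn_ge0 ?addr_ge0 //.
  exact: le_trans deta_le half_eps_le.
apply: le_trans (ler_wpXn2r _ _ hM) _; rewrite ?addr_ge0 // exprMn.
apply: ler_pM; rewrite ?exprn_ge0 // ?addr_ge0 ?divr_ge0 ?invr_ge0 //.
by apply: expr1Ddiv_pred_le_e; rewrite // invr_ge0 ler0n invf_le1 ?ler1n.
Qed.

End PerturbationBounds.
End ExpBounds.

Section SumBounds.
Variable R : realDomainType.

Lemma sum_offdiag_le r (a : 'I_r -> R) :
  \sum_k \sum_(h | h != k) a k * a h <= (r%:R - 1) * \sum_k a k ^+ 2.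
Proof.
have offdiagE : \sum_k \sum_(h | h != k) a k * a h = (\sum_k a k) ^+ 2 - \sum_k a k ^+ 2.
  rewrite expr2 big_distrl /= -sumrB; apply: eq_bigr => k _.
  by rewrite big_distrr /= [in RHS](bigD1 k) //= expr2 addrAC subrr add0r.
have sqdiffE : \sum_(k < r) \sum_(h < r) (a k - a h) ^+ 2 =
    2 * (r%:R * \sum_k a k ^+ 2 - (\sum_k a k) ^+ 2).
  transitivity (\sum_k (r%:R * a k ^+ 2 + \sum_h a h ^+ 2 - 2 * a k * \sum_h a h)).
    apply: eq_bigr => k _.
    rewrite (eq_bigr (fun h => a k ^+ 2 + a h ^+ 2 - 2 * a k * a h)) => [|h _]; last by ring.
    by rewrite sumrB big_split /= sumr_const card_ord -[_ *+ r]mulr_natl -big_distrr.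
  rewrite sumrB big_split /= sumr_const card_ord -big_distrr -big_distrl -big_distrr /=.
  by rewrite -mulr_natr; ring.
have : 0 <= \sum_(k < r) \sum_(h < r) (a k - a h) ^+ 2.
  by apply: sumr_ge0 => k _; apply: sumr_ge0 => h _; exact: sqr_ge0.
rewrite sqdiffE pmulr_rge0 // subr_ge0 offdiagE mulrBl mul1r => ?.
by rewrite lerD2r.
Qed.

Lemma sum_diag_offdiag_le r (a : 'I_r -> R) (D O : R) : 0 <= O ->
  \sum_k \sum_h a k * a h * (if k == h then D else O) <=
  (D + O * (r%:R - 1)) * \sum_k a k ^+ 2.
Proof.
move=> O_ge0.
have -> : \sum_k \sum_h a k * a h * (if k == h then D else O) =
    D * \sum_k a k ^+ 2 + O * \sum_k \sum_(h | h != k) a k * a h.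
  rewrite !big_distrr -big_split /=; apply: eq_bigr => k _.
  rewrite (bigD1 k) //= eqxx big_distrr /= expr2 [D * _]mulrC; congr (_ + _).
  by apply: eq_bigr => h; rewrite eq_sym => /negbTE ->; rewrite mulrC.
by rewrite mulrDl lerD2l -mulrA ler_wpM2l // sum_offdiag_le.
Qed.

End SumBounds.

Lemma natr_sub1_le_sqrt (R : rcfType) r : r%:R - 1 <= Num.sqrt (r%:R * (r%:R - 1)) :> R.
Proof.
case: r => [|r]; first by rewrite sub0r (le_trans _ (sqrtr_ge0 _)) // oppr_le0.
have r1_ge0 : 0 <= r.+1%:R - 1 :> R by rewrite subr_ge0 ler1n.
rewrite -[leLHS](ger0_norm r1_ge0) -sqrtr_sqr ler_sqrt ?mulr_ge0 //.
by rewrite expr2 ler_wpM2r // lerBlDr lerDl.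
Qed.

Lemma sqrt_le_natr (R : rcfType) r : Num.sqrt (r%:R * (r%:R - 1)) <= r%:R :> R.
Proof.
rewrite -[leRHS](ger0_norm (ler0n R r)) -sqrtr_sqr ler_sqrt ?sqr_ge0 // expr2.
by rewrite ler_wpM2l // lerBlDr lerDl.
Qed.

Section ComplexInner.
Variable R : realType.
Local Notation C := R[i].

Lemma normC_cabs (z : C) : `|z| = (cabs z)%:C.
Proof. by rewrite normc_def. Qed.

Lemma normc_real (x : R) : `|x%:C| = `|x|%:C.
Proof. by rewrite normc_def /= expr0n /= addr0 sqrtr_sqr. Qed.

Lemma real_complexB (a b : R) : (a - b)%:C = a%:C - b%:C :> C.
Proof. exact: rmorphB. Qed.

Lemma real_complex_subXX (a b : R) k :
  ((a + b) ^+ k - a ^+ k)%:C = (a%:C + b%:C) ^+ k - a%:C ^+ k :> C.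
Proof. by rewrite rmorphB !rmorphXn rmorphD. Qed.

Lemma cabs_ge0 (z : C) : 0 <= cabs z.
Proof. exact: sqrtr_ge0. Qed.

Lemma cabs2_ge0 (z : C) : 0 <= cabs2 z.
Proof. by rewrite addr_ge0 ?sqr_ge0. Qed.

Lemma cabs_sqr (z : C) : cabs z ^+ 2 = cabs2 z.
Proof. by rewrite sqr_sqrtr ?cabs2_ge0. Qed.

Lemma cabs2E (z : C) : (cabs2 z)%:C = z * z^*.
Proof. by rewrite /cabs2 add_Re2_Im2 normCK. Qed.

Lemma cnorm2_ge0 n (x : 'cV[C]_n) : 0 <= cnorm2 x.
Proof. by apply: sumr_ge0 => i _; apply: cabs2_ge0. Qed.

Lemma cnorm2E n (x : 'cV[C]_n) : (cnorm2 x)%:C = cinner x x.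
Proof. by rewrite /cnorm2 rmorph_sum; apply: eq_bigr => i _; apply: cabs2E. Qed.

Lemma cinnerC n (u v : 'cV[C]_n) : cinner v u = (cinner u v)^*.
Proof.
rewrite /cinner rmorph_sum; apply: eq_bigr => t _.
by rewrite rmorphM /= conjCK mulrC.
Qed.

Lemma conjc_i : ('i%C : C)^* = - 'i%C.
Proof. by rewrite complexiE conjCi. Qed.

Lemma mulc_ii : 'i%C * 'i%C = -1 :> C.
Proof. by rewrite -expr2 sqr_i. Qed.

Lemma cinner_polar n (u v : 'cV[C]_n) :
  4 * cinner u v = cinner (u + v) (u + v) - cinner (u - v) (u - v)
    + 'i%C * cinner (u + 'i%C *: v) (u + 'i%C *: v)
    - 'i%C * cinner (u - 'i%C *: v) (u - 'i%C *: v).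
Proof.
rewrite /cinner !big_distrr -!sumrN -!big_split /=; apply: eq_bigr => t _.
rewrite !mxE !rmorphD !rmorphN !rmorphM /= conjc_i.
have ii := mulc_ii; ring: ii.
Qed.

Lemma cinner_polar_sum n (u v : 'cV[C]_n) :
  cinner (u + v) (u + v) + cinner (u - v) (u - v)
    + cinner (u + 'i%C *: v) (u + 'i%C *: v) + cinner (u - 'i%C *: v) (u - 'i%C *: v)
  = 4 * (cinner u u + cinner v v).
Proof.
rewrite /cinner -!big_split big_distrr /=; apply: eq_bigr => t _.
rewrite !mxE !rmorphD !rmorphN !rmorphM /= conjc_i.
have ii := mulc_ii; ring: ii.
Qed.

Lemma norm_cinner_le1 n (u v : 'cV[C]_n) :
  cnorm2 u = 1 -> cnorm2 v = 1 -> `|cinner u v| <= 1.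
Proof.
move=> u1 v1; set c := cinner u v.
have : 0 <= cinner (u - c *: v) (u - c *: v) by rewrite -cnorm2E ler0c cnorm2_ge0.
have -> : cinner (u - c *: v) (u - c *: v) =
    cinner u u - c^* * cinner u v - c * cinner v u + c * c^* * cinner v v.
  rewrite /cinner !big_distrr -!sumrN -!big_split /=; apply: eq_bigr => t _.
  by rewrite !mxE rmorphB rmorphM /=; ring.
rewrite [cinner v u]cinnerC -/c -!cnorm2E u1 v1 rmorph1 !mulr1 [c^* * c]mulrC.
by rewrite addrAC subrK subr_ge0 -normCK expr_le1.
Qed.

Section JLEmbedding.
Variables (m n : nat) (eta : R) (M : 'M[C]_(m, n)) (S : pred 'cV[C]_n).
Hypothesis JL_M : JL_embedding eta M S.

Lemma JL_cinnerB_self x : S x ->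
  `|cinner (M *m x) (M *m x) - cinner x x| <= eta%:C * cinner x x.
Proof.
case/JL_M=> ex [/andP[ex_gtN ex_lt] Mx].
rewrite -!cnorm2E Mx -rmorphB -rmorphM normc_real lecR.
rewrite (_ : _ - _ = ex * cnorm2 x); last by ring.
by rewrite normrM (ger0_norm (cnorm2_ge0 x)) ler_wpM2r ?cnorm2_ge0 // ler_norml !ltW // ltrNl.
Qed.

Lemma JL_cinnerB u v :
  cnorm2 u = 1 -> cnorm2 v = 1 ->
  {subset [:: u + v; u - v; u + 'i%C *: v; u - 'i%C *: v] <= S} ->
  `|cinner (M *m u) (M *m v) - cinner u v| <= (2 * eta)%:C.
Proof.
move=> u1 v1 sub_S.
have JL x : x \in [:: u + v; u - v; u + 'i%C *: v; u - 'i%C *: v] ->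
    `|cinner (M *m x) (M *m x) - cinner x x| <= eta%:C * cinner x x.
  by move=> /sub_S; apply: JL_cinnerB_self.
have := JL (u + v); have := JL (u - v); have := JL (u + 'i%C *: v); have := JL (u - 'i%C *: v).
rewrite !inE !eqxx ?orbT => /(_ isT) h4 /(_ isT) h3 /(_ isT) h2 /(_ isT) h1.
rewrite mulmxDr in h1; rewrite mulmxBr in h2; rewrite mulmxDr -scalemxAr in h3.
rewrite mulmxBr -scalemxAr in h4.
have polarB : 4 * (cinner (M *m u) (M *m v) - cinner u v) =
  (cinner (M *m u + M *m v) (M *m u + M *m v) - cinner (u + v) (u + v))
  - (cinner (M *m u - M *m v) (M *m u - M *m v) - cinner (u - v) (u - v))
  + 'i%C * (cinner (M *m u + 'i%C *: (M *m v)) (M *m u + 'i%C *: (M *m v))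
            - cinner (u + 'i%C *: v) (u + 'i%C *: v))
  - 'i%C * (cinner (M *m u - 'i%C *: (M *m v)) (M *m u - 'i%C *: (M *m v))
            - cinner (u - 'i%C *: v) (u - 'i%C *: v)).
  by rewrite mulrBr !cinner_polar; ring.
have : `|4 * (cinner (M *m u) (M *m v) - cinner u v)| <= 4 * (2 * eta)%:C.
  rewrite polarB; apply: le_trans (ler_normD _ _) _.
  apply: le_trans (lerD (ler_normD _ _) (lexx _)) _.
  apply: le_trans (lerD (lerD (ler_normD _ _) (lexx _)) (lexx _)) _.
  rewrite !normrN !normrM complexiE normCi !mul1r.
  apply: le_trans (lerD (lerD (lerD h1 h2) h3) h4) _.
  rewrite -!mulrDr cinner_polar_sum -!cnorm2E u1 v1.
  by rewrite [leRHS](_ : _ = eta%:C * (4 * (1%:C + 1%:C))) // rmorphM rmorph_nat; ring.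
by rewrite normrM ger0_norm ?ler0n // ler_pM2l ?ltr0n.
Qed.

End JLEmbedding.
End ComplexInner.

Section CPTensor.
Variables (R : realType) (d r : nat) (alpha : 'I_r -> R[i]).

Lemma tnorm2_cp_tensor (n : 'I_d -> nat) (y : forall l : 'I_d, 'I_r -> 'cV[R[i]]_(n l)) :
  (tnorm2 (cp_tensor alpha y))%:C =
  \sum_k \sum_h alpha k * (alpha h)^* * \prod_l cinner (y l k) (y l h).
Proof.
transitivity (\sum_(i : multi_index n) \sum_k \sum_h
    alpha k * (alpha h)^* * \prod_l (y l k (i l) 0 * (y l h (i l) 0)^*)).
  rewrite /tnorm2 rmorph_sum; apply: eq_bigr => i _.
  apply: etrans (cabs2E _) _; rewrite /cp_tensor rmorph_sum big_distrl /=.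
  apply: eq_bigr => k _; rewrite big_distrr /=; apply: eq_bigr => h _.
  rewrite rmorphM rmorph_prod /= big_split /= -!mulrA; congr (_ * _); exact: mulrCA.
rewrite exchange_big /=; apply: eq_bigr => k _.
rewrite exchange_big /=; apply: eq_bigr => h _.
by rewrite -big_distrr /= /cinner bigA_distr_dffun.
Qed.

Lemma mode_products_cp_tensor (n m : 'I_d -> nat)
    (y : forall l : 'I_d, 'I_r -> 'cV[R[i]]_(n l)) (A : forall l : 'I_d, 'M[R[i]]_(m l, n l)) :
  mode_products (cp_tensor alpha y) A =1 cp_tensor alpha (fun l k => A l *m y l k).
Proof.
move=> j; rewrite /mode_products /cp_tensor.
under eq_bigr => i _ do rewrite big_distrl /=.
rewrite exchange_big /=; apply: eq_bigr => k _.
under eq_bigr => i _ do rewrite -mulrA -big_split /=.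
rewrite -big_distrr /= -(bigA_distr_dffun (fun l (t : 'I_(n l)) => y l k t 0 * A l (j l) t)).
congr (_ * _).
by apply: eq_bigr => l _; rewrite mxE; apply: eq_bigr => t _; rewrite mulrC.
Qed.

Lemma tnorm2_cp_tensorB_le (n m : 'I_d -> nat)
    (y : forall l : 'I_d, 'I_r -> 'cV[R[i]]_(n l)) (z : forall l : 'I_d, 'I_r -> 'cV[R[i]]_(m l))
    (g : 'I_r -> 'I_r -> R) :
  (forall k h, `|\prod_l cinner (z l k) (z l h) - \prod_l cinner (y l k) (y l h)|
                 <= (g k h)%:C) ->
  `|tnorm2 (cp_tensor alpha y) - tnorm2 (cp_tensor alpha z)| <=
  \sum_k \sum_h cabs (alpha k) * cabs (alpha h) * g k h.
Proof.
move=> zy_le; rewrite -lecR -normc_real real_complexB !tnorm2_cp_tensor -sumrB rmorph_sum.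
apply: le_trans (ler_norm_sum _ _ _) _; apply: ler_sum => k _.
rewrite -sumrB rmorph_sum; apply: le_trans (ler_norm_sum _ _ _) _; apply: ler_sum => h _.
rewrite -mulrBr !normrM norm_conjC distrC !normC_cabs !rmorphM.
by rewrite ler_wpM2l ?ler0c ?mulr_ge0 ?cabs_ge0 // -normC_cabs.
Qed.

End CPTensor.

Section Coherence.
Variables (R : realType) (d : nat) (n : 'I_d -> nat) (r : nat).
Variables (y : forall l : 'I_d, 'I_r -> 'cV[R[i]]_(n l)).

Lemma coherence_ge0 : 0 <= coherence y.
Proof. exact: bigmax_ge_id. Qed.

Lemma cabs_cinner_le_coherence l k h :
  h != k -> cabs (cinner (y l k) (y l h)) <= coherence y.
Proof.
move=> hk; apply: le_trans (le_bigmax _ _ l); apply: le_trans (le_bigmax _ _ k).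
exact: le_bigmax_cond.
Qed.

Lemma coherence_le1 : standard_form y -> coherence y <= 1.
Proof.
move=> sf; apply: bigmax_le => // l _; apply: bigmax_le => // k _.
apply: bigmax_le => // h _.
by rewrite -lecR -normC_cabs rmorph1 norm_cinner_le1.
Qed.

End Coherence.

Section ModewiseJL.
Variables (R : realType) (d : nat) (n m : 'I_d -> nat) (r : nat) (eta : R).
Variables (y : forall l : 'I_d, 'I_r -> 'cV[R[i]]_(n l)).
Variables (A : forall l : 'I_d, 'M[R[i]]_(m l, n l)).
Hypotheses (eta_ge0 : 0 <= eta) (sf : standard_form y).
Hypothesis JL_A : forall j, JL_embedding eta (A j) (Sprime y j).
Arguments JL_A : clear implicits.

Lemma Sprime_polar j (h k : 'I_r) : (h < k)%N ->
  {subset [:: y j k + y j h; y j k - y j h; y j k + 'i%C *: y j h; y j k - 'i%C *: y j h]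
     <= Sprime y j}.
Proof.
move=> hk x; rewrite !inE => x_in; apply/orP; left.
apply/existsP; exists h; apply/existsP; exists k.
by rewrite hk; case/or4P: x_in => /eqP ->; rewrite eqxx ?orbT.
Qed.

Lemma Sprime_factor j k : Sprime y j (y j k).
Proof. by apply/orP; right; apply/existsP; exists k. Qed.

Lemma mode_cinnerB_le l k h :
  `|cinner (A l *m y l k) (A l *m y l h) - cinner (y l k) (y l h)| <= (2 * eta)%:C.
Proof.
have [hk | kh | /val_inj <-] := ltngtP h k.
- exact (JL_cinnerB (JL_A l) (sf l k) (sf l h) (Sprime_polar hk)).
- rewrite cinnerC [cinner (y l k) _]cinnerC -rmorphB norm_conjC.
  exact (JL_cinnerB (JL_A l) (sf l h) (sf l k) (Sprime_polar kh)).
- apply: le_trans (JL_cinnerB_self (JL_A l) (@Sprime_factor l h)) _.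
  by rewrite -cnorm2E sf rmorph1 mulr1 lecR ler_peMl // ler1n.
Qed.

Lemma mode_prod_cinnerB_le k h :
  `|\prod_l cinner (A l *m y l k) (A l *m y l h) - \prod_l cinner (y l k) (y l h)| <=
  (if k == h then (1 + 2 * eta) ^+ d - 1
   else (coherence y + 2 * eta) ^+ d - coherence y ^+ d)%:C.
Proof.
have eta2_ge0 : 0 <= (2 * eta)%:C by rewrite ler0c mulr_ge0.
case: eqVneq => [<- | hk].
  rewrite -[X in (_ - X)%:C](expr1n _ d) real_complex_subXX.
  apply: norm_prodrB_le _ eta2_ge0 _ (fun l => mode_cinnerB_le l k k) => [|l].
    by rewrite ler0c.
  by rewrite -cnorm2E sf normc_real normr1.
rewrite real_complex_subXX.
apply: norm_prodrB_le _ eta2_ge0 _ (fun l => mode_cinnerB_le l k h).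
  by rewrite ler0c coherence_ge0.
by move=> l; rewrite normC_cabs lecR cabs_cinner_le_coherence // eq_sym.
Qed.

End ModewiseJL.

Section ModewiseJLBounds.
Variables (R : realType) (d : nat) (n m : 'I_d -> nat) (r : nat).
Variables (eps : R) (alpha : 'I_r -> R[i]) (y : forall l : 'I_d, 'I_r -> 'cV[R[i]]_(n l)).
Variables (A : forall l : 'I_d, 'M[R[i]]_(m l, n l)).
Hypotheses (d_gt0 : (0 < d)%N) (eps_gt0 : 0 < eps) (eps_le : eps <= 3 / 4).
Hypotheses (sf : standard_form y).
Hypothesis JL_A : forall j, JL_embedding (eps / (4 * d%:R)) (A j) (Sprime y j).

Local Notation Y := (cp_tensor alpha y).
Local Notation err := `|tnorm2 Y - tnorm2 (mode_products Y A)|.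
Local Notation mu := (coherence y).
Local Notation e := (expR (1 : R)).
Local Notation S := (alpha_norm2 alpha).
Local Notation q := (Num.sqrt (r%:R * (r%:R - 1)) : R).
Local Notation eta := (eps / (4 * d%:R)).

Let eps_ge0 : 0 <= eps. Proof. exact: ltW. Qed.
Let e_ge1 : 1 <= e. Proof. exact: expR1_ge1. Qed.
Let e_ge0 : 0 <= e. Proof. exact: le_trans ler01 e_ge1. Qed.
Let q_ge0 : 0 <= q. Proof. exact: sqrtr_ge0. Qed.

Let eta_ge0 : 0 <= eta.
Proof. by rewrite divr_ge0 ?mulr_ge0. Qed.

Let deta : d%:R * (2 * eta) <= eps / 2.
Proof.
by rewrite [leLHS](_ : _ = eps / 2) //; field; rewrite pnatr_eq0 -lt0n.
Qed.

Let eps_le2 : eps <= 2.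
Proof. by apply: le_trans eps_le _; lra. Qed.

Let S_ge0 : 0 <= S.
Proof. by apply: sumr_ge0 => k _; apply: cabs2_ge0. Qed.

Lemma err_le_pert :
  err <= ((1 + 2 * eta) ^+ d - 1) * S + ((mu + 2 * eta) ^+ d - mu ^+ d) * q * S.
Proof.
have -> : tnorm2 (mode_products Y A) = tnorm2 (cp_tensor alpha (fun l k => A l *m y l k)).
  by apply: eq_bigr => i _; rewrite mode_products_cp_tensor.
apply: le_trans (tnorm2_cp_tensorB_le alpha (mode_prod_cinnerB_le eta_ge0 sf JL_A)) _.
have O_ge0 : 0 <= (mu + 2 * eta) ^+ d - mu ^+ d.
  by rewrite subr_ge0 ler_wpXn2r ?coherence_ge0 // lerDl mulr_ge0.
apply: le_trans (sum_diag_offdiag_le (fun k => cabs (alpha k)) _ O_ge0) _.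
have -> : \sum_k cabs (alpha k) ^+ 2 = S by apply: eq_bigr => k _; rewrite cabs_sqr.
rewrite mulrDl lerD2l -!mulrA; apply/ler_wpM2l/ler_wpM2r => //.
exact: natr_sub1_le_sqrt.
Qed.

Lemma err_le_coherence :
  err <= eps * (e + e ^+ 2 * q * Num.max (eps ^+ d.-1) (mu ^+ d.-1)) * S.
Proof.
set M := Num.max _ _; apply: le_trans err_le_pert _.
have eta2_ge0 : 0 <= 2 * eta by rewrite mulr_ge0.
have diag := diag_pert_le d_gt0 eps_ge0 eps_le2 eta2_ge0 deta.
have offdiag := offdiag_pert_le d_gt0 eps_ge0 eta2_ge0 deta (coherence_ge0 y).
apply: le_trans (lerD (ler_wpM2r S_ge0 diag) (ler_wpM2r S_ge0 (ler_wpM2r q_ge0 offdiag))) _.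
rewrite [leRHS](_ : _ = eps * e * S + eps * e * M * q * S * e); last by ring.
by rewrite lerD2l ler_peMr // !mulr_ge0 // le_max exprn_ge0.
Qed.

Lemma coherence_bound_le :
  eps * (e + e ^+ 2 * q * Num.max (eps ^+ d.-1) (mu ^+ d.-1)) * S <=
  eps * e ^+ 2 * (r%:R + 1) * S.
Proof.
have M_le1 : Num.max (eps ^+ d.-1) (mu ^+ d.-1) <= 1.
  rewrite ge_max !exprn_ile1 ?coherence_ge0 ?coherence_le1 //.
  by apply: le_trans eps_le _; lra.
apply: ler_wpM2r => //; rewrite -[leRHS]mulrA; apply: ler_wpM2l => //.
rewrite [leRHS]mulrDr mulr1 addrC; apply: lerD; last by rewrite expr2 ler_peMl.
rewrite -mulrA; apply: ler_wpM2l; first exact: exprn_ge0.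
apply: le_trans (sqrt_le_natr R r); rewrite -[leRHS]mulr1.
exact: ler_wpM2l.
Qed.

Lemma err_le_orthogonal : mu = 0 -> err <= (eps + e * q * eps ^+ d) * e * S.
Proof.
move=> mu0; apply: le_trans err_le_pert _.
have eta2_ge0 : 0 <= 2 * eta by rewrite mulr_ge0.
have diag := diag_pert_le d_gt0 eps_ge0 eps_le2 eta2_ge0 deta.
have offdiag : (mu + 2 * eta) ^+ d - mu ^+ d <= eps ^+ d.
  rewrite mu0 add0r expr0n (negbTE (lt0n_neq0 d_gt0)) subr0.
  exact: ler_wpXn2r eta2_ge0 (eta_le_eps d_gt0 eps_ge0 deta).
apply: le_trans (lerD (ler_wpM2r S_ge0 diag) (ler_wpM2r S_ge0 (ler_wpM2r q_ge0 offdiag))) _.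
rewrite [leRHS](_ : _ = eps * e * S + eps ^+ d * q * S * e ^+ 2); last by ring.
rewrite lerD2l ler_peMr ?mulr_ge0 ?exprn_ge0 //.
by rewrite expr2 (le_trans e_ge1) // ler_peMl.
Qed.

End ModewiseJLBounds.

Theorem theorem4 (R : realType) (d : nat) (n m : 'I_d -> nat) (r : nat)
  (eps : R) (alpha : 'I_r -> R[i])
  (y : forall l : 'I_d, 'I_r -> 'cV[R[i]]_(n l))
  (A : forall l : 'I_d, 'M[R[i]]_(m l, n l)) :
  (0 < d)%N ->
  0 < eps <= 3 / 4 ->
  standard_form y ->
  (forall j : 'I_d, JL_embedding (eps / (4 * d%:R)) (A j) (Sprime y j)) ->
  let Y := cp_tensor alpha y in
  let err := `| tnorm2 Y - tnorm2 (mode_products Y A) | in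
  let mu := coherence y in
  let e := expR (1 : R) in
  let bound := eps * (e + e ^+ 2 * Num.sqrt (r%:R * (r%:R - 1))
                            * Num.max (eps ^+ d.-1) (mu ^+ d.-1)) * alpha_norm2 alpha in
  [/\ err <= bound,
      bound <= eps * e ^+ 2 * (r%:R + 1) * alpha_norm2 alpha
    & mu = 0 -> err <= (eps + e * Num.sqrt (r%:R * (r%:R - 1)) * eps ^+ d) * e
                        * alpha_norm2 alpha].
Proof.
move=> d_gt0 /andP[eps_gt0 eps_le] sf JL_A Y err mu e bound; split.
- exact: err_le_coherence d_gt0 eps_gt0 eps_le sf JL_A.
- exact: coherence_bound_le eps_gt0 eps_le sf.
- exact: err_le_orthogonal d_gt0 eps_gt0 eps_le sf JL_A.
Qed.
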